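(* Let $G$ be a finite, connected, undirected, unweighted graph without self-loops on $N=N_{\mathrm{G}}+N_{\mathrm{R}}$ vertices, properly two-colored with $N_{\mathrm{G}}$ green and $N_{\mathrm{R}}$ red vertices. Suppose every green vertex has degree $k_{\mathrm{G}}$ and every red vertex has degree $k_{\mathrm{R}}$. Let $a_{\mathrm{G}},a_{\mathrm{R}},b_{\mathrm{G}},b_{\mathrm{R}}>0$ with $a_{\mathrm{G}}a_{\mathrm{R}}\neq b_{\mathrm{G}}b_{\mathrm{R}}$. Define $$\zeta_{\mathrm{G}}=\frac{b_{\mathrm{R}}(a_{\mathrm{R}}k_{\mathrm{G}}+b_{\mathrm{G}}k_{\mathrm{R}})}{a_{\mathrm{R}}(a_{\mathrm{G}}k_{\mathrm{R}}+b_{\mathrm{R}}k_{\mathrm{G}})},\qquad \zeta_{\mathrm{R}}=\frac{b_{\mathrm{G}}(a_{\mathrm{G}}k_{\mathrm{R}}+b_{\mathrm{R}}k_{\mathrm{G}})}{a_{\mathrm{G}}(a_{\mathrm{R}}k_{\mathrm{G}}+b_{\mathrm{G}}k_{\mathrm{R}})}.$$ Then in the colored Moran process on $G$, the mean fixation probability of a single $A$ placed at a uniformly random vertex in a population otherwise of type $B$ is $$\rho_A=\frac{1-\frac{1}{N}\left(N_{\mathrm{G}}\zeta_{\mathrm{G}}+N_{\mathrm{R}}\zeta_{\mathrm{R}}\right)}{1-\zeta_{\mathrm{G}}^{N_{\mathrm{G}}}\zeta_{\mathrm{R}}^{N_{\mathrm{R}}}}.$$ Likewise, the mean fixation probability $\rho_B$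 of a single $B$ placed at a uniformly random vertex in a population otherwise of type $A$ is given by the same formula with the roles of $a$ and $b$ interchanged, i.e. $$\rho_B=\frac{1-\frac{1}{N}\left(N_{\mathrm{G}}\eta_{\mathrm{G}}+N_{\mathrm{R}}\eta_{\mathrm{R}}\right)}{1-\eta_{\mathrm{G}}^{N_{\mathrm{G}}}\eta_{\mathrm{R}}^{N_{\mathrm{R}}}},\quad \eta_{\mathrm{G}}=\frac{a_{\mathrm{R}}(b_{\mathrm{R}}k_{\mathrm{G}}+a_{\mathrm{G}}k_{\mathrm{R}})}{b_{\mathrm{R}}(b_{\mathrm{G}}k_{\mathrm{R}}+a_{\mathrm{R}}k_{\mathrm{G}})},\ \eta_{\mathrm{R}}=\frac{a_{\mathrm{G}}(b_{\mathrm{G}}k_{\mathrm{R}}+a_{\mathrm{R}}k_{\mathrm{G}})}{b_{\mathrm{G}}(b_{\mathrm{R}}k_{\mathrm{G}}+a_{\mathrm{G}}k_{\mathrm{R}})}.$$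
   Context: A proper two-coloring assigns each vertex one of two colors, green or red, so that no two adjacent vertices have the same color. Each vertex is occupied by one individual of type $A$ (mutant) or $B$ (resident). The fitness of an individual depends on its type and the color of its vertex: type $A$ has fitness $a_{\mathrm{G}}$ on green and $a_{\mathrm{R}}$ on red vertices; type $B$ has fitness $b_{\mathrm{G}}$ on green and $b_{\mathrm{R}}$ on red vertices. Colors are fixed over time. Colored Moran (birth-death) process: in each time step, one individual is chosen to reproduce with probability proportional to its fitness (relative to the total fitness of the population); its offspring (of the same type) replaces the occupant of a neighbor chosen uniformly at random among the parent's neighbors. The fixation probability of $A$ is the probability that the process is absorbed in the all-$A$ state. *)

From HB Require Import structures.
From mathcomp Require Import all_boot all_order all_algebra.
From mathcomp Require Import all_classical all_reals all_analysis.
Set Implicit Arguments. Unset Strict Implicit. Unset Printing Implicit Defensive.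
Import Order.TTheory GRing.Theory Num.Theory numFieldNormedType.Exports.
Local Open Scope ring_scope.

(* Vertices: V : finType; adjacency e : rel V.
   color x = true means x is green, false means red.
   A state of the process is the set S : {set V} of vertices occupied by A
   (mutants); all other vertices are occupied by B (residents). *)

Section ColoredMoran.
Variables (R : realType) (V : finType) (e : rel V) (color : V -> bool).
Variables (aG aR bG bR : R).

Definition deg (x : V) : nat := #|[set y | e x y]|.

Definition fitness (S : {set V}) (x : V) : R :=
  if x \in S then (if color x then aG else aR)
  else (if color x then bG else bR).

Definition total_fitness (S : {set V}) : R := \sum_(x : V) fitness S x.

Definition offspring_state (S : {set V}) (x y : V) : {set V} :=
  if x \in S then y |: S else S :\ y.

Definition moran_step (S T : {set V}) : R :=
  \sum_(x : V) \sum_(y : V | e x y)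
     (fitness S x / total_fitness S) * (deg x)%:R^-1
     * (offspring_state S x y == T)%:R.

Fixpoint moran_nstep (n : nat) (S T : {set V}) : R :=
  match n with
  | 0 => (S == T)%:R
  | n'.+1 => \sum_(U : {set V}) moran_step S U * moran_nstep n' U T
  end.

Definition fixA (S : {set V}) : R := limn (fun n => moran_nstep n S [set: V]).
Definition fixB (S : {set V}) : R := limn (fun n => moran_nstep n S (finset.set0 : {set V})).

Definition rhoA : R := (#|V|%:R)^-1 * \sum_(v : V) fixA [set v].
Definition rhoB : R := (#|V|%:R)^-1 * \sum_(v : V) fixB (~: [set v]).
End ColoredMoran.

(* 1. General facts about the Moran chain on a connected graph with positive
      fitnesses: the one-step kernel is stochastic, from every state the full
      set is reached within #|V| steps with positive probability, hence the
      mass left on transient states decays geometrically.  Consequently, for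
      every harmonic function g (one that equals its one-step expectation)
      the value g S is the expectation of g at absorption; if g takes
      different values on the two absorbing states, the probability of
      absorption in the full set from S is (g S - g0) / (g1 - g0).

   2. On the regular bipartite graph, g S = prod_(v in S) zeta(color v) with
      zeta(green) = zG and zeta(red) = zR is harmonic: the flows across each
      edge between an A and a B individual cancel.  Since aG aR <> bG bR,
      zG <> 1, so g separates the absorbing states, and averaging the
      resulting fixation probabilities over the starting vertex gives the
      formulas for rhoA and rhoB. *)

From HB Require Import structures.
From mathcomp Require Import all_boot all_order all_algebra.
From mathcomp Require Import all_classical all_reals all_analysis.
From mathcomp Require Import ring lra.
Import Order.TTheory GRing.Theory Num.Theory numFieldNormedType.Exports.
Local Open Scope ring_scope.

Lemma geometric_bound_cvg (R : realType) (u : nat -> R) (L K c : R) (N : nat) :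
  0 <= c -> c < 1 -> (0 < N)%N ->
  (forall n, `|u n - L| <= K * c ^+ (n %/ N)) -> (u n @[n --> \oo] --> L)%classic.
Proof.
move=> c_ge0 c_lt1 N_gt0 bound.
apply/cvgrPdist_le => eps eps_gt0.
have K1_gt0 : 0 < `|K| + 1 by rewrite ltr_pwDr // normr_ge0.
have norm_c : `|c| < 1 by rewrite ger0_norm.
have /cvgrPdist_le /(_ (eps / (`|K| + 1))) := cvg_expr norm_c.
move=> /(_ (divr_gt0 eps_gt0 K1_gt0)) [k _ small].
exists (k * N)%N => // n /= le_kN_n.
have le_k : (k <= n %/ N)%N by rewrite -(mulnK k N_gt0) leq_div2r.
have := small _ le_k; rewrite /= sub0r normrN ger0_norm ?exprn_ge0 //.
set x := c ^+ (n %/ N) in bound *; move=> x_small.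
have x_ge0 : 0 <= x by rewrite exprn_ge0.
rewrite distrC; apply: (le_trans (bound n)).
have -> : eps = (`|K| + 1) * (eps / (`|K| + 1)) by rewrite mulrC divfK // gt_eqF.
apply: (le_trans (y := (`|K| + 1) * x)); last by rewrite ler_wpM2l // ltW.
by rewrite ler_wpM2r // (le_trans (ler_norm K)) // lerDl.
Qed.

Section MoranChain.
Variables (R : realType) (V : finType) (e : rel V) (color : V -> bool).
Variables (aG aR bG bR : R).
Hypotheses (e_sym : symmetric e) (e_conn : forall x y : V, connect e x y)
  (N_ge2 : (2 <= #|V|)%N)
  (aG_gt0 : 0 < aG) (aR_gt0 : 0 < aR) (bG_gt0 : 0 < bG) (bR_gt0 : 0 < bR).

Local Notation fit := (fitness color aG aR bG bR).
Local Notation tot := (total_fitness color aG aR bG bR).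
Local Notation step := (moran_step e color aG aR bG bR).
Local Notation P := (moran_nstep e color aG aR bG bR).
Local Notation sT := [set: V].
Local Notation s0 := (finset.set0 : {set V}).

Lemma fitness_gt0 S x : 0 < fit S x.
Proof. by rewrite /fitness; case: ifP; case: ifP. Qed.

Lemma card_V_gt0 : (0 < #|V|)%N.
Proof. exact: ltnW N_ge2. Qed.

Lemma exists_neighbour x : exists y, e x y.
Proof.
have /card_gt0P [v] : (0 < #|predC1 x|)%N.
  by rewrite cardC1; move: N_ge2; case: #|V| => [|[|]].
rewrite !inE => v_neq_x.
have /connectP [[|y p] /= path_xv last_v] := e_conn x v.
  by rewrite last_v eqxx in v_neq_x.
by exists y; case/andP: path_xv.
Qed.

Lemma deg_gt0 x : (0 < deg e x)%N.
Proof.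
have [y exy] := exists_neighbour x.
by rewrite /deg card_gt0; apply/set0Pn; exists y; rewrite inE.
Qed.

Lemma total_fitness_gt0 S : 0 < tot S.
Proof.
have /card_gt0P [x _] := card_V_gt0.
rewrite /total_fitness (bigD1 x) //= ltr_wpDr ?fitness_gt0 //.
by apply: sumr_ge0 => y _; exact/ltW/fitness_gt0.
Qed.

Definition rate S x : R := fit S x / tot S * (deg e x)%:R^-1.

Lemma rate_gt0 S x : 0 < rate S x.
Proof.
by rewrite /rate mulr_gt0 ?invr_gt0 ?ltr0n ?deg_gt0 // divr_gt0
  ?fitness_gt0 ?total_fitness_gt0.
Qed.

Lemma step_expectation S (g : {set V} -> R) :
  \sum_T step S T * g T =
  \sum_x \sum_(y | e x y) rate S x * g (offspring_state S x y).
Proof.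
rewrite /moran_step.
under eq_bigr => T _ do rewrite big_distrl /=.
rewrite exchange_big /=; apply: eq_bigr => x _.
under eq_bigr => T _ do rewrite big_distrl /=.
rewrite exchange_big /=; apply: eq_bigr => y _.
rewrite (bigD1 (offspring_state S x y)) //= eqxx mulr1 big1 ?addr0 // => T.
by rewrite eq_sym => /negbTE ->; rewrite mulr0 mul0r.
Qed.

Lemma rate_sum S : \sum_x \sum_(y | e x y) rate S x = 1.
Proof.
transitivity (\sum_x fit S x / tot S).
  apply: eq_bigr => x _.
  rewrite (eq_bigl (fun y => y \in [set y | e x y])) => [|y]; last by rewrite inE.
  rewrite sumr_const -mulr_natr /rate -/(deg e x) -mulrA mulVf ?mulr1 //.
  by rewrite pnatr_eq0 -lt0n deg_gt0.
by rewrite -mulr_suml divff // gt_eqF // total_fitness_gt0.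
Qed.

Lemma step_expectation_const S (c : R) (g : {set V} -> R) :
  (forall x y, e x y -> g (offspring_state S x y) = c) ->
  \sum_T step S T * g T = c.
Proof.
move=> gc; rewrite step_expectation -[c]mul1r -(rate_sum S) mulr_suml.
by apply: eq_bigr => x _; rewrite mulr_suml; apply: eq_bigr => y exy; rewrite gc.
Qed.

Lemma step_sum S : \sum_T step S T = 1.
Proof.
under eq_bigr do rewrite -[step S _]mulr1.
exact: (@step_expectation_const S 1 (fun=> 1)).
Qed.

Lemma step_ge0 S T : 0 <= step S T.
Proof.
rewrite /moran_step; apply: sumr_ge0 => x _; apply: sumr_ge0 => y _.
by rewrite mulr_ge0 ?ler0n // ltW // (rate_gt0 S x).
Qed.

Lemma step_ge_rate S x y : e x y -> rate S x <= step S (offspring_state S x y).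
Proof.
move=> exy; rewrite /moran_step (bigD1 x) //= (bigD1 y) //= eqxx mulr1 -addrA.
rewrite lerDl; apply: addr_ge0; apply: sumr_ge0 => *; [|apply: sumr_ge0 => *];
  by rewrite mulr_ge0 ?ler0n // ltW // rate_gt0.
Qed.

Lemma offspring_same_type (S : {set V}) x y :
  (x \in S) = (y \in S) -> offspring_state S x y = S.
Proof.
move=> same; apply/setP => z; rewrite /offspring_state.
by case: ifP => xS; rewrite !inE; case: eqP => // ->; rewrite -same xS.
Qed.

Lemma step_absorbing A : (forall x y, offspring_state A x y = A) ->
  forall T, step A T = (T == A)%:R.
Proof.
move=> fixA T; have := @step_expectation_const A (A == T)%:R (fun U => (U == T)%:R).
rewrite (bigD1 T) //= eqxx mulr1 big1 ?addr0 => [->|U /negbTE ->]; last by rewrite mulr0.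
  by rewrite eq_sym.
by move=> x y _; rewrite fixA.
Qed.

Lemma step_setT T : step sT T = (T == sT)%:R.
Proof.
by apply: step_absorbing => x y; rewrite /offspring_state finset.in_setT finset.setUT.
Qed.

Lemma step_set0 T : step s0 T = (T == s0)%:R.
Proof. by apply: step_absorbing => x y; rewrite /offspring_state inE finset.set0D. Qed.

Lemma nstep_ge0 n S T : 0 <= P n S T.
Proof.
elim: n S => [|n IH] S /=; first by rewrite ler0n.
by apply: sumr_ge0 => U _; rewrite mulr_ge0 ?step_ge0.
Qed.

Lemma nstep_harmonic (g : {set V} -> R) :
  (forall S, \sum_T step S T * g T = g S) ->
  forall n S, \sum_T P n S T * g T = g S.
Proof.
move=> g_harm; elim=> [|n IH] S /=.
  rewrite (bigD1 S) //= eqxx mul1r big1 ?addr0 // => T.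
  by rewrite eq_sym => /negbTE ->; rewrite mul0r.
under eq_bigr => T _ do rewrite big_distrl /=.
rewrite exchange_big /= -(g_harm S); apply: eq_bigr => U _.
by under eq_bigr do rewrite -mulrA; rewrite -mulr_sumr IH.
Qed.

Lemma nstep_sum n S : \sum_T P n S T = 1.
Proof.
under eq_bigr do rewrite -[P n S _]mulr1.
apply: (@nstep_harmonic (fun=> 1)) => S'.
by under eq_bigr do rewrite mulr1; rewrite step_sum.
Qed.

Lemma nstep_add n m S T : P (n + m) S T = \sum_U P n S U * P m U T.
Proof.
elim: n S => [|n IH] S /=.
  rewrite add0n (bigD1 S) //= eqxx mul1r big1 ?addr0 // => U.
  by rewrite eq_sym => /negbTE ->; rewrite mul0r.
under eq_bigr => U _ do rewrite IH big_distrr /=.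
rewrite exchange_big /=; apply: eq_bigr => W _.
by rewrite big_distrl /=; apply: eq_bigr => U _; rewrite mulrA.
Qed.

Lemma nstep_absorbing A : (forall T, step A T = (T == A)%:R) ->
  forall n T, P n A T = (T == A)%:R.
Proof.
move=> absA; elim=> [|n IH] T /=; first by rewrite eq_sym.
rewrite (bigD1 A) //= absA eqxx mul1r big1 ?addr0 // => U /negbTE U_neq_A.
by rewrite absA U_neq_A mul0r.
Qed.

Lemma set0_neq_setT : s0 != sT.
Proof.
have /card_gt0P [x _] := card_V_gt0.
by apply/eqP => h; have := finset.in_setT x; rewrite -h inE.
Qed.

Definition transient n S : R := \sum_(T | (T != s0) && (T != sT)) P n S T.

Lemma transient_split n S : P n S s0 + P n S sT + transient n S = 1.
Proof.
rewrite -(nstep_sum n S) (bigD1 s0) //= (bigD1 sT) /=;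
  last by rewrite eq_sym set0_neq_setT.
by rewrite addrA.
Qed.

Lemma transient_ge0 n S : 0 <= transient n S.
Proof. by apply: sumr_ge0 => T _; exact: nstep_ge0. Qed.

Lemma transient_le1 n S : transient n S <= 1.
Proof.
have := transient_split n S; have := nstep_ge0 n S s0; have := nstep_ge0 n S sT.
lra.
Qed.

Lemma transient_set0 n : transient n s0 = 0.
Proof.
apply: big1 => T /andP [/negbTE T_neq0 _].
by rewrite (@nstep_absorbing s0 step_set0) T_neq0.
Qed.

Lemma transient_setT n : transient n sT = 0.
Proof.
apply: big1 => T /andP [_ /negbTE T_neqT].
by rewrite (@nstep_absorbing sT step_setT) T_neqT.
Qed.

Lemma transient_add n m S c :
  (forall U, transient m U <= c) -> transient (n + m) S <= transient n S * c.
Proof.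
move=> bound.
have -> : transient (n + m) S = \sum_U P n S U * transient m U.
  rewrite /transient; under eq_bigr do rewrite nstep_add.
  by rewrite exchange_big /=; apply: eq_bigr => U _; rewrite mulr_sumr.
rewrite (bigD1 s0) //= transient_set0 mulr0 add0r (bigD1 sT) /=;
  last by rewrite eq_sym set0_neq_setT.
rewrite transient_setT mulr0 add0r [transient n S]/transient mulr_suml.
by apply: ler_sum => U _; rewrite ler_wpM2l ?nstep_ge0.
Qed.

Lemma boundary_edge S : S != s0 -> S != sT ->
  exists x y, [/\ x \in S, y \notin S & e x y].
Proof.
move=> S_neq0 S_neqT.
have [x0 x0S] := set0Pn _ S_neq0.
have [y0 y0S] : exists y, y \notin S.
  case: (boolP [exists y, y \notin S]) => [/existsP out //|].
  rewrite negb_exists => /forallP all_in; case/negP: S_neqT.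
  by apply/eqP/setP => z; rewrite finset.in_setT; move: (all_in z); rewrite negbK.
have [/existsP [x /existsP [y /and3P [xS yS exy]]]|no_edge] :=
  boolP [exists x, exists y, [&& x \in S, y \notin S & e x y]].
  by exists x, y.
have closedS : fingraph.closed e (mem S).
  move=> x y exy; apply/idP/idP => [xS|yS]; apply/negPn/negP => nS; case/negP: no_edge.
    by apply/existsP; exists x; apply/existsP; exists y; rewrite xS nS.
  by apply/existsP; exists y; apply/existsP; exists x; rewrite yS nS e_sym.
by have := closed_connect closedS (e_conn x0 y0); rewrite /= x0S (negbTE y0S).
Qed.

(* From any nonempty state with at most j B-vertices, the full set is
   reached in j steps with positive probability (mutants invade one
   boundary edge at a time). *)
Lemma nstep_setT_gt0 j S : S != s0 -> (#|~: S| <= j)%N -> 0 < P j S sT.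
Proof.
elim: j S => [|j IH] S S_neq0 card_le.
  move: card_le; rewrite leqn0 cards_eq0 => /eqP noB.
  by rewrite -[S]finset.setCK noB finset.setC0 /= eqxx ltr01.
have [->|S_neqT] := eqVneq S sT.
  by rewrite (@nstep_absorbing sT step_setT) eqxx ltr01.
have [x [y [xS yS exy]]] := @boundary_edge S S_neq0 S_neqT.
have U_def : offspring_state S x y = y |: S by rewrite /offspring_state xS.
set U := offspring_state S x y in U_def.
have U_neq0 : U != s0 by rewrite U_def; apply/set0Pn; exists y; rewrite !inE eqxx.
have card_U : (#|~: U| <= j)%N.
  have -> : ~: U = (~: S) :\ y.
    by rewrite U_def; apply/setP => z; rewrite !inE negb_or andbC.
  by move: card_le; rewrite (cardsD1 y (~: S)) inE yS.
rewrite /= (bigD1 U) //= ltr_wpDr ?mulr_gt0 ?IH //.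
  by apply: sumr_ge0 => *; rewrite mulr_ge0 ?step_ge0 ?nstep_ge0.
exact: lt_le_trans (rate_gt0 S x) (@step_ge_rate S x y exy).
Qed.

Definition decay : R := \big[Num.max/0]_(S : {set V}) transient #|V| S.

Lemma decay_lt1 : decay < 1.
Proof.
apply: bigmax_lt => // S _.
have [->|S_neq0] := eqVneq S s0; first by rewrite transient_set0 ltr01.
have := @nstep_setT_gt0 #|V| S S_neq0 (max_card _).
have := transient_split #|V| S; have := nstep_ge0 #|V| S s0; lra.
Qed.

Lemma decay_ge0 : 0 <= decay.
Proof. by apply: le_trans (le_bigmax _ _ s0); rewrite transient_set0. Qed.

Lemma transient_decay n S : transient n S <= decay ^+ (n %/ #|V|).
Proof.
have step_bound U : transient #|V| U <= decay by exact: le_bigmax.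
have full k U : transient (k * #|V|) U <= decay ^+ k.
  elim: k U => [|k IH] U; first by rewrite mul0n expr0 transient_le1.
  rewrite mulSnr exprSr.
  apply: le_trans (@transient_add (k * #|V|) #|V| U decay step_bound) _.
  by rewrite ler_wpM2r // decay_ge0.
rewrite {1}(divn_eq n #|V|).
apply: le_trans (@transient_add (n %/ #|V| * #|V|) (n %% #|V|) S 1 (transient_le1 _)) _.
by rewrite mulr1 full.
Qed.

Section HarmonicAbsorption.
Variable g : {set V} -> R.
Hypothesis g_harmonic : forall S, \sum_T step S T * g T = g S.

Let transient_part n S := \sum_(T | (T != s0) && (T != sT)) P n S T * (g T - g s0).

Lemma harmonic_decomposition n S :
  P n S sT * (g sT - g s0) = (g S - g s0) - transient_part n S.
Proof.
have total : \sum_T P n S T * (g T - g s0) = g S - g s0.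
  under eq_bigr do rewrite mulrBr.
  by rewrite sumrB -mulr_suml nstep_sum mul1r (@nstep_harmonic g g_harmonic).
rewrite -total (bigD1 s0) //= subrr mulr0 add0r (bigD1 sT) /=;
  last by rewrite eq_sym set0_neq_setT.
by rewrite addrK.
Qed.

Let M := \sum_T `|g T - g s0|.

Lemma transient_part_bound n S :
  `|transient_part n S| <= M * decay ^+ (n %/ #|V|).
Proof.
apply: le_trans (ler_norm_sum _ _ _) _.
apply: (le_trans (y := M * transient n S)); last first.
  by rewrite ler_wpM2l ?transient_decay // sumr_ge0.
rewrite /transient mulr_sumr; apply: ler_sum => T _.
rewrite normrM (ger0_norm (nstep_ge0 _ _ _)) mulrC ler_wpM2r ?nstep_ge0 //.
by rewrite /M (bigD1 T) //= lerDl sumr_ge0.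
Qed.

Lemma harmonic_const : g sT = g s0 -> forall S, g S = g s0.
Proof.
move=> g_eq S; apply/eqP; rewrite -subr_eq0; apply/eqP.
have bound n : `|(fun=> g S - g s0) n - 0| <= M * decay ^+ (n %/ #|V|).
  rewrite subr0 /=; have := harmonic_decomposition n S.
  rewrite g_eq subrr mulr0 => /eqP; rewrite eq_sym subr_eq0 => /eqP ->.
  exact: transient_part_bound.
have lim0 := @geometric_bound_cvg R _ 0 _ _ _ decay_ge0 decay_lt1 card_V_gt0 bound.
by have := cvg_lim _ lim0; rewrite lim_cst // => ->.
Qed.

Hypothesis g_separates : g sT != g s0.

Let g_gap_neq0 : g sT - g s0 != 0.
Proof. by rewrite subr_eq0. Qed.

Lemma absorption_setT_bound n S :
  `|P n S sT - (g S - g s0) / (g sT - g s0)|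
    <= M / `|g sT - g s0| * decay ^+ (n %/ #|V|).
Proof.
have -> : P n S sT - (g S - g s0) / (g sT - g s0) = - transient_part n S / (g sT - g s0).
  apply: (mulIf g_gap_neq0).
  by rewrite mulrBl !divfK // harmonic_decomposition; ring.
rewrite normrM normrN normfV mulrAC ler_wpM2r ?invr_ge0 ?normr_ge0 //.
exact: transient_part_bound.
Qed.

Lemma absorption_setT_cvg S :
  (P n S sT @[n --> \oo] --> (g S - g s0) / (g sT - g s0))%classic.
Proof.
exact: (@geometric_bound_cvg R _ _ _ _ _ decay_ge0 decay_lt1 card_V_gt0
  (absorption_setT_bound ^~ S)).
Qed.

Lemma absorption_set0_cvg S :
  (P n S s0 @[n --> \oo] --> (g sT - g S) / (g sT - g s0))%classic.
Proof.
have L_eq : (g sT - g S) / (g sT - g s0) = 1 - (g S - g s0) / (g sT - g s0).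
  by apply: (mulIf g_gap_neq0); rewrite divfK // mulrBl divfK // mul1r; ring.
rewrite L_eq; apply: (@geometric_bound_cvg _ _ _ (M / `|g sT - g s0| + 1)
  _ _ decay_ge0 decay_lt1 card_V_gt0) => n.
have -> : P n S s0 - (1 - (g S - g s0) / (g sT - g s0)) =
    - (P n S sT - (g S - g s0) / (g sT - g s0)) - transient n S.
  by have := transient_split n S; lra.
apply: le_trans (ler_normB _ _) _; rewrite normrN (ger0_norm (transient_ge0 n S)).
by rewrite [leRHS]mulrDl mul1r lerD ?absorption_setT_bound ?transient_decay.
Qed.

End HarmonicAbsorption.

Section RegularBipartite.
Variables (kG kR : nat).
Hypotheses (proper : forall x y : V, e x y -> color x != color y)
  (degG : forall x : V, color x -> deg e x = kG)
  (degR : forall x : V, ~~ color x -> deg e x = kR).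

Local Notation NG := #|[set x | color x]|.
Local Notation NR := #|[set x | ~~ color x]|.

(* A vertex and its neighbour carry both colors. *)
Lemma both_colors : exists g r, color g /\ ~~ color r.
Proof.
have /card_gt0P [x _] := card_V_gt0.
have [y exy] := exists_neighbour x; have := proper x y exy.
by case cx: (color x); case cy: (color y) => // _;
  [exists x, y | exists y, x]; rewrite cx cy.
Qed.

Lemma kG_gt0 : 0 < kG%:R :> R.
Proof. by have [g [_ [cg _]]] := both_colors; rewrite ltr0n -(degG g cg) deg_gt0. Qed.

Lemma kR_gt0 : 0 < kR%:R :> R.
Proof. by have [_ [r [_ cr]]] := both_colors; rewrite ltr0n -(degR r cr) deg_gt0. Qed.

Lemma deg_color x : (deg e x)%:R = (if color x then kG%:R else kR%:R) :> R.
Proof. by case: (boolP (color x)) => c; [rewrite degG | rewrite degR]. Qed.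

Definition zG : R := bR * (aR * kG%:R + bG * kR%:R) / (aR * (aG * kR%:R + bR * kG%:R)).
Definition zR : R := bG * (aG * kR%:R + bR * kG%:R) / (aG * (aR * kG%:R + bG * kR%:R)).
Definition zeta (c : bool) : R := if c then zG else zR.

Lemma zeta_gt0 c : 0 < zeta c.
Proof.
have := kG_gt0; have := kR_gt0.
by case: c => kR0 kG0; rewrite /= /zG /zR divr_gt0 ?mulr_gt0 ?addr_gt0 ?mulr_gt0.
Qed.

Definition zeta_prod (S : {set V}) : R := \prod_(v in S) zeta (color v).

Lemma edge_balance (S : {set V}) x y : x \in S -> y \notin S -> e x y ->
  rate S x * (zeta_prod (offspring_state S x y) - zeta_prod S)
  + rate S y * (zeta_prod (offspring_state S y x) - zeta_prod S) = 0.
Proof.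
move=> xS yS exy.
have cy : color y = ~~ color x.
  by move: (proper x y exy); case: (color x); case: (color y).
rewrite /offspring_state xS (negbTE yS) /zeta_prod big_setU1 //= (big_setD1 x xS) /=.
rewrite /rate /fitness xS (negbTE yS) !deg_color cy.
have := total_fitness_gt0 S; set t := tot S => t_gt0.
have := kG_gt0; have := kR_gt0.
case: (color x) => kR0 kG0; rewrite /= /zG /zR; field;
  by rewrite ?gt_eqF // ?mulr_gt0 // ?addr_gt0 // ?mulr_gt0.
Qed.

Let flow S x y :=
  if e x y then rate S x * (zeta_prod (offspring_state S x y) - zeta_prod S) else 0.

Lemma flow_antisym S x y : flow S x y + flow S y x = 0.
Proof.
rewrite /flow (e_sym y x); case: ifP => [exy|_]; last by rewrite addr0.
have [xS|xS] := boolP (x \in S); have [yS|yS] := boolP (y \in S).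
- by rewrite !offspring_same_type ?xS ?yS // !subrr !mulr0 addr0.
- exact: edge_balance.
- by rewrite addrC edge_balance // e_sym.
- by rewrite !offspring_same_type ?(negbTE xS) ?(negbTE yS) // !subrr !mulr0 addr0.
Qed.

Lemma zeta_prod_harmonic S : \sum_T step S T * zeta_prod T = zeta_prod S.
Proof.
have const : \sum_x \sum_(y | e x y) rate S x * zeta_prod S = zeta_prod S.
  rewrite -[RHS]mul1r -(rate_sum S) mulr_suml.
  by apply: eq_bigr => x _; rewrite mulr_suml.
rewrite step_expectation; apply/eqP; rewrite -subr_eq0 -[X in _ - X]const.
have -> : \sum_x \sum_(y | e x y) rate S x * zeta_prod (offspring_state S x y)
    - \sum_x \sum_(y | e x y) rate S x * zeta_prod S = \sum_x \sum_y flow S x y.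
  rewrite -sumrB; apply: eq_bigr => x _; rewrite -sumrB big_mkcond /=.
  by apply: eq_bigr => y _; rewrite /flow; case: ifP => _; rewrite ?mulrBr ?subrr.
have flow_opp : \sum_x \sum_y flow S x y = - \sum_x \sum_y flow S x y.
  rewrite [in LHS]exchange_big /= -sumrN; apply: eq_bigr => y _.
  rewrite -sumrN; apply: eq_bigr => x _; have := flow_antisym S x y; lra.
by apply/eqP; lra.
Qed.

Lemma sum_by_color (h : bool -> R) :
  \sum_v h (color v) = NG%:R * h true + NR%:R * h false.
Proof.
rewrite (bigID color) /=; congr (_ + _).
  rewrite (eq_bigl (fun v => v \in [set x | color x])) => [|v]; last by rewrite !inE.
  by rewrite (eq_bigr (fun=> h true)) ?sumr_const ?mulr_natl // => v; rewrite inE => ->.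
rewrite (eq_bigl (fun v => v \in [set x | ~~ color x])) => [|v]; last by rewrite !inE.
by rewrite (eq_bigr (fun=> h false)) ?sumr_const ?mulr_natl // => v;
  rewrite inE => /negbTE ->.
Qed.

Lemma prod_by_color (h : bool -> R) :
  \prod_v h (color v) = h true ^+ NG * h false ^+ NR.
Proof.
rewrite (bigID color) /=; congr (_ * _).
  rewrite (eq_bigl (fun v => v \in [set x | color x])) => [|v]; last by rewrite !inE.
  by rewrite (eq_bigr (fun=> h true)) ?prodr_const // => v; rewrite inE => ->.
rewrite (eq_bigl (fun v => v \in [set x | ~~ color x])) => [|v]; last by rewrite !inE.
by rewrite (eq_bigr (fun=> h false)) ?prodr_const // => v; rewrite inE => /negbTE ->.
Qed.

Lemma zeta_prod_set0 : zeta_prod s0 = 1.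
Proof. by rewrite /zeta_prod big_set0. Qed.

Lemma zeta_prod_setT : zeta_prod sT = zG ^+ NG * zR ^+ NR.
Proof.
rewrite -(prod_by_color zeta) /zeta_prod.
by apply: eq_bigl => v; rewrite finset.in_setT.
Qed.

Lemma zeta_prod_set1 v : zeta_prod [set v] = zeta (color v).
Proof. by rewrite /zeta_prod big_set1. Qed.

Lemma zeta_prod_setC1 v : zeta_prod (~: [set v]) * zeta (color v) = zeta_prod sT.
Proof.
rewrite /zeta_prod [RHS](bigD1 v) ?finset.in_setT //= mulrC; congr (_ * _).
by apply: eq_bigl => u; rewrite !inE.
Qed.

Hypothesis neutral_neq : aG * aR != bG * bR.

(* Away from neutrality zG <> 1, so zeta_prod separates the absorbing states. *)
Lemma zeta_prod_separates : zeta_prod sT != zeta_prod s0.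
Proof.
apply/negP => /eqP same; have [g [_ [cg _]]] := both_colors.
have := @harmonic_const zeta_prod zeta_prod_harmonic same [set g].
rewrite zeta_prod_set1 zeta_prod_set0 /= cg /zG => zG1.
have := kG_gt0; have := kR_gt0 => kR0 kG0.
have den_neq0 : aR * (aG * kR%:R + bR * kG%:R) != 0
  by rewrite gt_eqF ?mulr_gt0 ?addr_gt0 ?mulr_gt0.
have balance : bR * (aR * kG%:R + bG * kR%:R) = aR * (aG * kR%:R + bR * kG%:R).
  move: zG1 => /(congr1 (fun t => t * (aR * (aG * kR%:R + bR * kG%:R)))).
  by rewrite divfK // mul1r.
case/negP: neutral_neq; rewrite -subr_eq0.
have : (aG * aR - bG * bR) * kR%:R = 0 by move: balance; lra.
by move/eqP; rewrite mulf_eq0 (gt_eqF kR0) orbF.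
Qed.

Local Notation F := (zeta_prod sT).

Lemma F_neq1 : F != 1.
Proof. by have := zeta_prod_separates; rewrite zeta_prod_set0. Qed.

Lemma zeta_prod_setT_neq0 : F != 0.
Proof.
rewrite zeta_prod_setT mulf_neq0 ?expf_neq0 ?gt_eqF //;
  [exact: (zeta_gt0 true) | exact: (zeta_gt0 false)].
Qed.

Lemma fixA_single v :
  fixA e color aG aR bG bR [set v] = (1 - zeta (color v)) / (1 - F).
Proof.
have lim := @absorption_setT_cvg _ zeta_prod_harmonic zeta_prod_separates [set v].
rewrite /fixA (cvg_lim _ lim) // zeta_prod_set1 zeta_prod_set0.
by rewrite -opprB -(opprB 1 F) invrN mulrNN.
Qed.

Lemma fixB_single v :
  fixB e color aG aR bG bR (~: [set v])
  = (1 - (zeta (color v))^-1) / (1 - F^-1).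
Proof.
have lim := @absorption_set0_cvg _ zeta_prod_harmonic zeta_prod_separates (~: [set v]).
rewrite /fixB (cvg_lim _ lim) // zeta_prod_set0.
have z_neq0 : zeta (color v) != 0 by rewrite gt_eqF ?zeta_gt0.
have F1 : F - 1 != 0 by rewrite subr_eq0 F_neq1.
have -> : zeta_prod (~: [set v]) = F / zeta (color v).
  by rewrite -(zeta_prod_setC1 v) mulfK.
by field; rewrite zeta_prod_setT_neq0 F1 z_neq0.
Qed.

Lemma mean_by_color (h : bool -> R) (D : R) :
  #|V|%:R^-1 * \sum_v (1 - h (color v)) / D
  = (1 - #|V|%:R^-1 * (NG%:R * h true + NR%:R * h false)) / D.
Proof.
have N_neq0 : #|V|%:R != 0 :> R by rewrite pnatr_eq0 -lt0n card_V_gt0.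
by rewrite -mulr_suml sumrB sumr_const sum_by_color mulrA mulrBr mulVf.
Qed.

Definition etaG : R := aR * (bR * kG%:R + aG * kR%:R) / (bR * (bG * kR%:R + aR * kG%:R)).
Definition etaR : R := aG * (bG * kR%:R + aR * kG%:R) / (bG * (bR * kG%:R + aG * kR%:R)).

Lemma etaG_inv : etaG = zG^-1.
Proof.
have := kG_gt0; have := kR_gt0 => kR0 kG0.
by rewrite /etaG /zG; field; rewrite ?gt_eqF // ?mulr_gt0 // ?addr_gt0 // ?mulr_gt0.
Qed.

Lemma etaR_inv : etaR = zR^-1.
Proof.
have := kG_gt0; have := kR_gt0 => kR0 kG0.
by rewrite /etaR /zR; field; rewrite ?gt_eqF // ?mulr_gt0 // ?addr_gt0 // ?mulr_gt0.
Qed.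

Lemma fixation_formulas :
  (forall v, cvgn (fun n => P n [set v] sT))
  /\ (forall v, cvgn (fun n => P n (~: [set v]) s0))
  /\ rhoA e color aG aR bG bR
       = (1 - #|V|%:R^-1 * (NG%:R * zG + NR%:R * zR)) / (1 - zG ^+ NG * zR ^+ NR)
  /\ rhoB e color aG aR bG bR
       = (1 - #|V|%:R^-1 * (NG%:R * etaG + NR%:R * etaR))
         / (1 - etaG ^+ NG * etaR ^+ NR).
Proof.
split; first by move=> v;
  apply: cvgP (@absorption_setT_cvg _ zeta_prod_harmonic zeta_prod_separates _).
split; first by move=> v;
  apply: cvgP (@absorption_set0_cvg _ zeta_prod_harmonic zeta_prod_separates _).
split.
  rewrite /rhoA; under eq_bigr do rewrite fixA_single.
  by rewrite (mean_by_color zeta) zeta_prod_setT.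
rewrite /rhoB; under eq_bigr do rewrite fixB_single.
rewrite (mean_by_color (fun c => (zeta c)^-1)) zeta_prod_setT.
by rewrite etaG_inv etaR_inv !exprVn -invfM.
Qed.

End RegularBipartite.
End MoranChain.

Theorem theorem1 (R : realType) (V : finType) (e : rel V) (color : V -> bool)
    (kG kR : nat) (aG aR bG bR : R)
    (e_sym : symmetric e) (e_irr : irreflexive e)
    (e_conn : forall x y : V, connect e x y)
    (N_ge2 : (2 <= #|V|)%N)
    (proper : forall x y : V, e x y -> color x != color y)
    (degG : forall x : V, color x -> deg e x = kG)
    (degR : forall x : V, ~~ color x -> deg e x = kR)
    (aG_gt0 : 0 < aG) (aR_gt0 : 0 < aR) (bG_gt0 : 0 < bG) (bR_gt0 : 0 < bR)
    (neutral_neq : aG * aR != bG * bR) :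
  let N := #|V| in
  let NG := #|[set x | color x]| in
  let NR := #|[set x | ~~ color x]| in
  let zG := bR * (aR * kG%:R + bG * kR%:R) / (aR * (aG * kR%:R + bR * kG%:R)) in
  let zR := bG * (aG * kR%:R + bR * kG%:R) / (aG * (aR * kG%:R + bG * kR%:R)) in
  let hG := aR * (bR * kG%:R + aG * kR%:R) / (bR * (bG * kR%:R + aR * kG%:R)) in
  let hR := aG * (bG * kR%:R + aR * kG%:R) / (bG * (bR * kG%:R + aG * kR%:R)) in
  (forall v : V, cvgn (fun n => moran_nstep e color aG aR bG bR n [set v] [set: V]))
  /\ (forall v : V, cvgn (fun n => moran_nstep e color aG aR bG bR n (~: [set v]) (finset.set0 : {set V})))
  /\ rhoA e color aG aR bG bR
       = (1 - N%:R^-1 * (NG%:R * zG + NR%:R * zR)) / (1 - zG ^+ NG * zR ^+ NR)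
  /\ rhoB e color aG aR bG bR
       = (1 - N%:R^-1 * (NG%:R * hG + NR%:R * hR)) / (1 - hG ^+ NG * hR ^+ NR).
Proof.
move=> N NG NR zG zR hG hR.
exact: (@fixation_formulas R V e color aG aR bG bR e_sym e_conn N_ge2
  aG_gt0 aR_gt0 bG_gt0 bR_gt0 kG kR proper degG degR neutral_neq).
Qed.
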